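(* Assume $\operatorname{add}(\mathcal N)=\operatorname{cov}(\mathcal N)$. Then $\mathcal{NM}_{\operatorname{add}(\mathcal N)}$, $\mathcal{NF}_{\operatorname{add}(\mathcal N)}$ and $\mathcal{ND}_{\operatorname{add}(\mathcal N)}$ are positively $2^{\mathfrak c}$-coneable in $\left(\mathbb R^{[0,1]}\right)^{\operatorname{add}(\mathcal N)}$.
   Context: For a regular infinite cardinal $\kappa$ (ordinals $<\kappa$ with usual order), a $\kappa$-sequence $(x_\alpha)_{\alpha<\kappa}$ converges to $x$ if for every neighbourhood $U$ of $x$ there is $\alpha_0<\kappa$ with $x_\alpha\in U$ for all $\alpha_0<\alpha<\kappa$; $\left(\mathbb R^{[0,1]}\right)^{\kappa}$ is the real vector space of $\kappa$-sequences of functions $[0,1]\to\mathbb R$ with indexwise operations. $\lambda$ is Lebesgue measure, $\mathcal N$ the null subsets of $[0,1]$; $\operatorname{add}(\mathcal N)$ is the least cardinality of a family of null sets whose union is not null (a regular cardinal), $\operatorname{cov}(\mathcal N)$ the least cardinality of a family of null sets covering $[0,1]$. For bounded transfinite sequences of reals, $\liminf$ is the infimum of cluster points. $\mathcal{NM}_{\kappa}$: $\kappa$-sequences of Lebesgue measurable $f_\alpha:[0,1]\to\mathbb R$ with $0\le f_\alpha\le f_\beta$ a.e. for $\alpha\le\beta$, converging a.e. to an integrable $f$, with $\int f_\alpha\,d\lambda$ not converging to $\int f\,d\lambda$. $\mathcal{NF}_{\kappa}$: $\kappa$-sequences of Lebesgue measurable $f_\alpha\ge0$ a.e. with $\liminf_\alpha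 f_\alpha$ integrable and $\int\liminf_\alpha f_\alpha\,d\lambda>\liminf_\alpha\int f_\alpha\,d\lambda$. $\mathcal{ND}_{\kappa}$: $\kappa$-sequences of Lebesgue measurable $f_\alpha:[0,1]\to\mathbb R$ dominated a.e. by a common integrable $g$, converging a.e. to an integrable $f$, with $\int|f_\alpha-f|\,d\lambda\not\to0$. $S$ is positively $\mu$-coneable if there is a linearly independent $B\subset S$ of cardinality $\mu$ all of whose finite combinations with positive coefficients lie in $S$. *)

From HB Require Import structures.
From mathcomp Require Import all_boot all_order all_algebra.
From mathcomp Require Import all_classical all_reals all_analysis.
Set Implicit Arguments. Unset Strict Implicit. Unset Printing Implicit Defensive.
Import Order.TTheory GRing.Theory Num.Theory.
Import numFieldNormedType.Exports.
Local Open Scope classical_set_scope.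
Local Open Scope ring_scope.

(* Lebesgue measure on R: the completed Lebesgue measure, so that "measurable"
   below means Lebesgue measurable.  The unit interval is `[0,1]. *)
Notation leb R := (@completed_lebesgue_measure R).
Notation I01 := (`[0%R, 1%R]%classic).

Definition card_le (A B : Type) : Prop := exists f : A -> B, injective f.
Definition card_lt (A B : Type) : Prop := card_le A B /\ ~ card_le B A.

Definition null_set {R : realType} (A : set R) : Prop :=
  A `<=` I01 /\ (leb R).-negligible A.

(* |I| = add(N) : some I-indexed family of null sets has non-null union,
   and every family indexed by a type of smaller cardinality has null union. *)
Definition is_addN (R : realType) (I : Type) : Prop :=
  (exists N : I -> set R, (forall i, null_set (N i)) /\
                          ~ null_set (\bigcup_i N i)) /\
  (forall (J : Type) (N : J -> set R), card_lt J I ->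
      (forall j, null_set (N j)) -> null_set (\bigcup_j N j)).

(* |I| = cov(N) : some I-indexed family of null sets covers [0,1],
   and no family indexed by a type of smaller cardinality does. *)
Definition is_covN (R : realType) (I : Type) : Prop :=
  (exists N : I -> set R, (forall i, null_set (N i)) /\
                          I01 `<=` \bigcup_i N i) /\
  (forall (J : Type) (N : J -> set R), card_lt J I ->
      (forall j, null_set (N j)) -> ~ (I01 `<=` \bigcup_j N j)).

(* lt is a strict well-order on I all of whose proper initial segments have
   cardinality smaller than I; hence (I, lt) is order-isomorphic to the
   initial ordinal |I| (with its usual order). *)
Definition initial_well_order (I : Type) (lt : I -> I -> Prop) : Prop :=
  [/\ (forall x, ~ lt x x),
      (forall x y z, lt x y -> lt y z -> lt x z),
      (forall x y, [\/ x = y, lt x y | lt y x]),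
      well_founded lt &
      (forall i, ~ card_le I {j : I | lt j i})].

Definition kconv (I : Type) (lt : I -> I -> Prop) (T : topologicalType)
  (u : I -> T) (l : T) : Prop :=
  forall U, nbhs l U -> exists a0, forall a, lt a0 a -> U (u a).

Definition kcluster (I : Type) (lt : I -> I -> Prop) (T : topologicalType)
  (u : I -> T) (l : T) : Prop :=
  forall U, nbhs l U -> forall a0, exists a, lt a0 a /\ U (u a).

(* liminf = infimum of the cluster points (taken in the extended reals,
   which agrees with the real liminf for bounded sequences). *)
Definition kliminf (R : realType) (I : Type) (lt : I -> I -> Prop)
  (u : I -> \bar R) : \bar R :=
  ereal_inf [set l : \bar R | kcluster lt u l].

Definition ae01 (R : realType) (P : R -> Prop) : Prop :=
  {ae leb R, forall x, I01 x -> P x}.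



(* the measurable space of Lebesgue measurable subsets of R
   (the domain of the completed Lebesgue measure) *)
Definition LebT (R : realType) :=
  caratheodory_type ((@wlength R idfun)^*%mu).

Definition leb_measurable (R : realType) (f : R -> R) : Prop :=
  measurable_fun (I01 : set (LebT R)) (f : LebT R -> R).

Definition leb_integrable (R : realType) (f : R -> \bar R) : Prop :=
  (leb R).-integrable (I01 : set (LebT R)) (f : LebT R -> \bar R).

Definition int01 (R : realType) (f : R -> \bar R) : \bar R :=
  (\int[leb R]_(x in (I01 : set (LebT R))) f x)%E.

(* A kappa-sequence of functions [0,1] -> R is f : I -> R -> R (only the
   values on [0,1] are relevant to the conditions below). *)

Definition NM (R : realType) (I : Type) (lt : I -> I -> Prop)
  (f : I -> R -> R) : Prop :=
  [/\ (forall a, leb_measurable (f a)),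
      (forall a b, a = b \/ lt a b -> ae01 (fun x => 0 <= f a x <= f b x)) &
      exists g : R -> R,
        [/\ leb_integrable (EFin \o g),
            ae01 (fun x => kconv lt (fun a => f a x) (g x)) &
            ~ kconv lt (fun a => int01 (EFin \o f a)) (int01 (EFin \o g))]].

Definition NF (R : realType) (I : Type) (lt : I -> I -> Prop)
  (f : I -> R -> R) : Prop :=
  [/\ (forall a, leb_measurable (f a)),
      (forall a, ae01 (fun x => 0 <= f a x)),
      leb_integrable (fun x => kliminf lt (fun a => (f a x)%:E)) &
      (kliminf lt (fun a => int01 (EFin \o f a))
        < int01 (fun x => kliminf lt (fun a => (f a x)%:E)))%E].

Definition ND (R : realType) (I : Type) (lt : I -> I -> Prop)
  (f : I -> R -> R) : Prop :=
  [/\ (forall a, leb_measurable (f a)),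
      (exists g : R -> R, leb_integrable (EFin \o g) /\
         forall a, ae01 (fun x => `|f a x| <= g x)) &
      exists h : R -> R,
        [/\ leb_integrable (EFin \o h),
            ae01 (fun x => kconv lt (fun a => f a x) (h x)) &
            ~ kconv lt (fun a => int01 (fun x => (`|f a x - h x|)%:E)) 0%E]].

Definition card_eq (A B : Type) : Prop := card_le A B /\ card_le B A.

(* S is positively 2^c-coneable in (R^[0,1])^I: there is a linearly
   independent B included in S, with |B| = |P(R)| = 2^c, all of whose finite
   (nonempty) combinations of distinct elements with positive coefficients lie
   in S.  Elements of R^[0,1] are represented by functions R -> R vanishing
   outside [0,1]. *)
Definition pos_coneable_2c (R : realType) (I : Type)
  (S : (I -> R -> R) -> Prop) : Prop :=
  exists B : set (I -> R -> R),
    [/\ (forall b, B b -> forall a x, ~ I01 x -> b a x = 0),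
        card_eq {b | B b} (set R),
        (forall (n : nat) (b : 'I_n -> I -> R -> R) (c : 'I_n -> R),
           injective b -> (forall k, B (b k)) ->
           (fun a x => \sum_(k < n) c k * b k a x) = (fun _ _ => 0) ->
           forall k, c k = 0) &
        (forall (n : nat) (b : 'I_n.+1 -> I -> R -> R) (c : 'I_n.+1 -> R),
           injective b -> (forall k, B (b k)) -> (forall k, 0 < c k) ->
           S (fun a x => \sum_(k < n.+1) c k * b k a x))].

From Pilot Require Import Defs.
From HB Require Import structures.
From mathcomp Require Import all_boot all_order all_algebra.
From mathcomp Require Import all_classical all_reals all_analysis.
From mathcomp Require Import measurable_realfun ring lra.
From Stdlib Require Cantor.
Set Implicit Arguments. Unset Strict Implicit. Unset Printing Implicit Defensive.
Import Order.TTheory GRing.Theory Num.Theory.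
Import numFieldNormedType.Exports.
Local Open Scope classical_set_scope.
Local Open Scope ring_scope.

(* Let (I, lt) be the ordinal kappa = add(N) = cov(N).
   1. Fix null sets (N_i)_{i<kappa} covering [0,1] (cov(N) = kappa).  The
      initial unions M_a = U_{j<a} N_j u N_a are null (fewer than add(N) null
      sets), increase with a, and every x in [0,1] lies in all M_a from some
      index on.  Hence for s > 0 the sequence a |-> s * 1_{M_a} converges a.e.
      to the constant s while all its integrals vanish: it belongs to NM, NF
      and ND, and so does every sequence agreeing with it off a fixed null set.
   2. The Cantor-type map 2^N -> [0,1], s |-> sum_{s_n} 2/4^(n+1), is
      injective and its range D is null (covered by 2^N intervals of length
      2/(3*4^N)); thus D is a null set of size continuum.
   3. On D we build an independent family (e_A)_{A subset R} of 0/1-valued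
      functions: for every A and countably many C_i <> A there is x in D with
      e_A(x) = 1 and e_{C_i}(x) = 0.
   4. The basis is b_A = 1_{M_a} off D and e_A on D.  It has cardinality
      |P(R)| = 2^c, is linearly independent by 3, and a positive combination
      with coefficient sum s agrees off D with s * 1_{M_a}, so lies in the
      three classes by 1. *)

Section LebesgueOnI01.
Variable R : realType.
Local Open Scope ereal_scope.

Lemma lebesgue_I01 : leb R I01 = 1.
Proof.
have := @lebesgue_measure_itv R `[0%R, 1%R]; rewrite /= lte01 sube0 => <-.
reflexivity.
Qed.

Lemma measurable_I01 : measurable (I01 : set (LebT R)).
Proof. by apply: sub_caratheodory; exact: measurable_itv. Qed.

Lemma negligible_measurable (Z : set R) :
  (leb R).-negligible Z -> measurable (Z : set (LebT R)).
Proof. exact: completed_lebesgue_measure_is_complete. Qed.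

(* A set of outer measure 0 is negligible (it is Caratheodory measurable). *)
Lemma outer_null_negligible (Z : set R) :
  (@wlength R idfun)^*%mu Z = 0 -> (leb R).-negligible Z.
Proof.
move=> Z0; exists Z; split => //.
apply: le_caratheodory_measurable => X.
have null_sub Y : Y `<=` Z -> (@wlength R idfun)^*%mu Y = 0.
  move=> YZ; apply/eqP; rewrite eq_le outer_measure_ge0 andbT -Z0.
  exact: le_outer_measure.
change ((@wlength R idfun)^*%mu (X `&` Z) + (@wlength R idfun)^*%mu (X `&` ~` Z)
  <= (@wlength R idfun)^*%mu X).
rewrite (null_sub (X `&` Z)); last by move=> ? [].
by rewrite add0e le_outer_measure // => x [].
Qed.

Lemma null_setS (A B : set R) : Defs.null_set B -> A `<=` B -> Defs.null_set A.
Proof. by move=> [BI nB] AB; split; [exact: subset_trans BI | exact: negligibleS nB]. Qed.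

Lemma null_setU (A B : set R) :
  Defs.null_set A -> Defs.null_set B -> Defs.null_set (A `|` B).
Proof. by move=> [AI nA] [BI nB]; split; [move=> x [/AI|/BI] | exact: negligibleU]. Qed.

Lemma ae01_off (P : R -> Prop) (Z : set R) : (leb R).-negligible Z ->
  (forall x, I01 x -> ~ Z x -> P x) -> ae01 P.
Proof.
move=> nZ HP; apply: (negligibleS _ nZ) => x /= nPx.
by apply: contrapT => Zx; apply: nPx => Ix; exact: HP.
Qed.

(* By completeness, a function that is a.e. constant on [0,1] is measurable. *)
Lemma measurable_ae_const d (T : measurableType d) (f : R -> T) (c : T)
    (Z : set R) : (leb R).-negligible Z -> (forall x, I01 x -> ~ Z x -> f x = c) ->
  measurable_fun (I01 : set (LebT R)) (f : LebT R -> T).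
Proof.
move=> nZ Hf _ Y mY.
have -> : (I01 : set (LebT R)) `&` (f : LebT R -> T) @^-1` Y =
    ((I01 `\` Z) `&` [set _ : LebT R | Y c]) `|` (I01 `&` Z `&` f @^-1` Y).
  apply/seteqP; split => x.
  - move=> [Ix Yx]; have [Zx|nZx] := pselect (Z x); first by right.
    by left; split; [split|] => //=; rewrite -(Hf x).
  - by case => [[[Ix nZx] Yc]|[[Ix Zx] Yx]]; split => //; rewrite /preimage /= Hf.
apply: measurableU.
- apply: measurableI.
    by apply: measurableD; [exact: measurable_I01 | exact: negligible_measurable].
  have [Yc|nYc] := pselect (Y c).
    by rewrite (_ : [set _ | _] = setT) //; apply/seteqP; split.
  by rewrite (_ : [set _ | _] = set0) //; apply/seteqP; split.
- by apply: negligible_measurable; apply: negligibleS nZ => x [[]].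
Qed.

Lemma int01_ae_const (f : R -> \bar R) (c : R) (Z : set R) :
  (leb R).-negligible Z -> (forall x, I01 x -> ~ Z x -> f x = c%:E) ->
  int01 f = c%:E.
Proof.
move=> nZ Hf; rewrite /int01 (@ae_eq_integral _ _ _ (leb R) _ (cst c%:E)).
- rewrite integral_cst; last exact: measurable_I01.
  by rewrite -[RHS]mule1; congr (_ * _); exact: lebesgue_I01.
- exact: measurable_I01.
- exact: (measurable_ae_const nZ Hf).
- exact: measurable_cst.
- exact: ae01_off nZ Hf.
Qed.

Lemma integrable_ae_const (f : R -> \bar R) (c : R) (Z : set R) :
  (leb R).-negligible Z -> (forall x, I01 x -> ~ Z x -> f x = c%:E) ->
  leb_integrable f.
Proof.
move=> nZ Hf; apply/integrableP; split; first exact: (measurable_ae_const nZ Hf).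
have int_abs : int01 (fun x => `|f x|) = `|c|%:E.
  by apply: (int01_ae_const nZ) => x Ix nZx; rewrite Hf.
by move: int_abs; rewrite /int01 => ->; rewrite ltry.
Qed.

Lemma int01_cst (c : R) : int01 (EFin \o (fun _ : R => c)) = c%:E.
Proof. exact: (int01_ae_const (negligible_set0 _)). Qed.

Lemma integrable_cst (c : R) : leb_integrable (EFin \o (fun _ : R => c)).
Proof. exact: (integrable_ae_const (c := c) (negligible_set0 _)). Qed.

End LebesgueOnI01.

Lemma hausdorff_nbhs_eq (T : topologicalType) (l v : T) :
  hausdorff_space T -> (forall U, nbhs l U -> U v) -> l = v.
Proof.
move=> hT lv; apply: hT => A B nA nB.
by exists v; split; [exact: lv | exact: nbhs_singleton].
Qed.

Section EventuallyConstant.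
Variables (I : Type) (lt : I -> I -> Prop).
Hypothesis lt_trans : forall x y z, lt x y -> lt y z -> lt x z.
Hypothesis lt_total : forall x y, [\/ x = y, lt x y | lt y x].
Hypothesis no_max : forall a, exists b, lt a b.

Lemma common_upper_bound a b : exists c, lt a c /\ lt b c.
Proof.
have [<-|ab|ba] := lt_total a b.
- by have [c ac] := no_max a; exists c.
- by have [c bc] := no_max b; exists c; split => //; exact: lt_trans ab bc.
- by have [c ac] := no_max a; exists c; split => //; exact: lt_trans ba ac.
Qed.

Lemma kconv_eventually_const (T : topologicalType) (u : I -> T) v t :
  (forall a, lt t a -> u a = v) -> kconv lt u v.
Proof. by move=> Hu U nU; exists t => a ta; rewrite Hu //; exact: nbhs_singleton. Qed.

Lemma not_kconv_eventually_const (T : topologicalType) (u : I -> T) c d t :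
  hausdorff_space T -> (forall a, lt t a -> u a = c) -> c <> d -> ~ kconv lt u d.
Proof.
move=> hT Hu cd Hk; apply: cd; apply/esym/hausdorff_nbhs_eq => // U nU.
have [a0 Ha0] := Hk U nU; have [e [a0e te]] := common_upper_bound a0 t.
by rewrite -(Hu e te); exact: Ha0.
Qed.

Lemma kliminf_eventually_const (R : realType) (u : I -> \bar R) v t :
  (forall a, lt t a -> u a = v) -> kliminf lt u = v.
Proof.
move=> Hu; rewrite /kliminf (_ : [set l | _] = [set v]) ?ereal_inf1 //.
apply/seteqP; split => l /=.
- move=> Hl; apply: hausdorff_nbhs_eq; first exact: ereal_hausdorff.
  by move=> U nU; have [a [ta Ua]] := Hl U nU t; rewrite -(Hu a ta).
- move=> -> U nU a0; have [c [a0c tc]] := common_upper_bound a0 t.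
  by exists c; split => //; rewrite Hu //; exact: nbhs_singleton.
Qed.

End EventuallyConstant.

Section InitialUnions.
Variables (R : realType) (I : Type) (lt : I -> I -> Prop).
Hypothesis Hwo : initial_well_order lt.
Hypothesis Hadd : is_addN R I.

Lemma segment_card_lt a : card_lt {j | lt j a} I.
Proof.
case: Hwo => _ _ _ _ small; split; last exact: small.
exists (@proj1_sig _ _) => -[x px] [y py] /= exy; subst y.
by congr exist; apply: Prop_irrelevance.
Qed.

Definition initial_union (N : I -> set R) (a : I) : set R :=
  (\bigcup_(j : {j | lt j a}) N (proj1_sig j)) `|` N a.

(* fewer than add(N) null sets have a null union *)
Lemma initial_union_null N a :
  (forall i, Defs.null_set (N i)) -> Defs.null_set (initial_union N a).
Proof.
move=> HN; apply: null_setU => //.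
exact: (Hadd.2 _ (fun j : {j | lt j a} => N (proj1_sig j)) (segment_card_lt a)).
Qed.

(* I has no maximum: otherwise every I-indexed union of null sets would be an
   initial union, hence null, contradicting the definition of add(N). *)
Lemma addN_no_max a : exists b, lt a b.
Proof.
apply: contrapT => no_above.
case: Hadd => -[N [HN nonnull]] _; apply: nonnull.
apply: (null_setS (initial_union_null a HN)) => x [i _ Nix].
case: Hwo => _ _ lt_total _ _.
have [ia|ia|ai] := lt_total i a.
- by subst i; right.
- by left; exists (exist _ i ia).
- by exfalso; apply: no_above; exists i.
Qed.

(* I is nonempty, since the empty union is null. *)
Lemma addN_inhabited : exists a : I, True.
Proof.
case: Hadd => -[N [HN nonnull]] _; apply: contrapT => noI; apply: nonnull.
rewrite (_ : \bigcup_i N i = set0); first by split => //; exact: negligible_set0.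
by apply/seteqP; split => x // [i]; exfalso; apply: noI; exists i.
Qed.

Lemma initial_union_mono N a b : lt a b -> initial_union N a `<=` initial_union N b.
Proof.
case: Hwo => _ lt_trans _ _ _ ab x [[[j ja] _ Njx]|Nax]; left.
- by exists (exist _ j (lt_trans _ _ _ ja ab)).
- by exists (exist _ a ab).
Qed.

Lemma initial_union_cover N x : I01 `<=` \bigcup_i N i -> I01 x ->
  exists t, forall a, lt t a -> initial_union N a x.
Proof.
by move=> cov /cov [t _ Ntx]; exists t => a ta; left; exists (exist _ t ta).
Qed.

Lemma null_chain_covering : is_covN R I ->
  exists M : I -> set R,
    [/\ forall a, (leb R).-negligible (M a),
        forall a b, lt a b -> M a `<=` M b &
        forall x, I01 x -> exists t, forall a, lt t a -> M a x].
Proof.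
case=> -[N [HN cov]] _; exists (initial_union N); split.
- by move=> a; exact: (initial_union_null a HN).2.
- by move=> a b; exact: initial_union_mono.
- by move=> x; exact: initial_union_cover.
Qed.

End InitialUnions.

(* A null subset of [0,1] of size continuum: the range of the Cantor-type map
   s |-> sum_{n | s n} 2/4^(n+1), whose weights dominate their tails. *)
Section CantorNullSet.
Variable R : realType.

Definition cantor_weight (n : nat) : R := 2 / 4 ^+ n.+1.

(* sum_{m >= n} cantor_weight m *)
Definition cantor_tail (n : nat) : R := 2 / (3 * 4 ^+ n).

Lemma cantor_tail_ge0 n : 0 <= cantor_tail n.
Proof. by rewrite /cantor_tail divr_ge0 // mulr_ge0 // exprn_ge0. Qed.

Lemma cantor_weight_ge0 n : 0 <= cantor_weight n.
Proof. by rewrite /cantor_weight divr_ge0 // exprn_ge0. Qed.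

Lemma cantor_weightE n : cantor_weight n = cantor_tail n - cantor_tail n.+1.
Proof.
have h : (4 : R) ^+ n != 0 by rewrite expf_neq0 // pnatr_eq0.
by rewrite /cantor_weight /cantor_tail !exprS; field; rewrite ?mulf_neq0 ?pnatr_eq0.
Qed.

Lemma cantor_tail_lt_weight n : cantor_tail n.+1 < cantor_weight n.
Proof.
have h : (0 : R) < 4 ^+ n.+1 by rewrite exprn_gt0.
rewrite /cantor_weight /cantor_tail ltr_pdivrMr ?mulr_gt0 //.
have -> : 2 / 4 ^+ n.+1 * (3 * 4 ^+ n.+1) = 6 :> R by field; rewrite gt_eqF.
lra.
Qed.

Definition cantor_digit (s : nat -> bool) (n : nat) : R :=
  if s n then cantor_weight n else 0.

Definition cantor_sum (s : nat -> bool) (N : nat) : R :=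
  \sum_(i < N) cantor_digit s i.

Lemma cantor_sumS s N : cantor_sum s N.+1 = cantor_sum s N + cantor_digit s N.
Proof. by rewrite /cantor_sum big_ord_recr. Qed.

Lemma cantor_digit_ge0 s n : 0 <= cantor_digit s n.
Proof. by rewrite /cantor_digit; case: ifP => // _; exact: cantor_weight_ge0. Qed.

Lemma cantor_digit_le s n : cantor_digit s n <= cantor_weight n.
Proof. by rewrite /cantor_digit; case: ifP => // _; exact: cantor_weight_ge0. Qed.

Lemma cantor_sum_ge0 s N : 0 <= cantor_sum s N.
Proof. by rewrite /cantor_sum sumr_ge0 // => i _; exact: cantor_digit_ge0. Qed.

Lemma cantor_sum_mono s N k : cantor_sum s N <= cantor_sum s (N + k).
Proof.
elim: k => [|k IH]; first by rewrite addn0.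
by rewrite addnS cantor_sumS (le_trans IH) // lerDl cantor_digit_ge0.
Qed.

Lemma cantor_sum_shift s N k :
  cantor_sum s (N + k) <= cantor_sum s N + cantor_tail N - cantor_tail (N + k).
Proof.
elim: k => [|k IH]; first by rewrite addn0 addrK.
have := cantor_digit_le s (N + k); rewrite cantor_weightE.
by rewrite addnS cantor_sumS; lra.
Qed.

Lemma cantor_sum_bound s N M : cantor_sum s M <= cantor_sum s N + cantor_tail N.
Proof.
have [NM|MN] := leqP N M.
  rewrite -(subnKC NM); apply: (le_trans (cantor_sum_shift _ _ _)).
  by rewrite lerBlDr lerDl cantor_tail_ge0.
apply: (le_trans (y := cantor_sum s N)); last by rewrite lerDl cantor_tail_ge0.
by rewrite -(subnKC (ltnW MN)) cantor_sum_mono.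
Qed.

Definition cantor_map (s : nat -> bool) : R := sup (range (cantor_sum s)).

Lemma cantor_sum_has_sup s : has_sup (range (cantor_sum s)).
Proof.
split; first by exists (cantor_sum s 0); exists 0%N.
by exists (cantor_sum s 0 + cantor_tail 0) => _ [M _ <-]; exact: cantor_sum_bound.
Qed.

Lemma cantor_map_ge s N : cantor_sum s N <= cantor_map s.
Proof. by apply: sup_upper_bound; [exact: cantor_sum_has_sup | exists N]. Qed.

Lemma cantor_map_le s N : cantor_map s <= cantor_sum s N + cantor_tail N.
Proof.
apply: ge_sup; first by exists (cantor_sum s 0); exists 0%N.
by move=> _ [M _ <-]; exact: cantor_sum_bound.
Qed.

Lemma cantor_map_lt s t N : (forall i, (i < N)%N -> s i = t i) ->
  s N = true -> t N = false -> cantor_map t < cantor_map s.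
Proof.
move=> st sN tN.
have e : cantor_sum s N = cantor_sum t N.
  by apply: eq_bigr => i _; rewrite /cantor_digit st.
have := cantor_map_ge s N.+1; have := cantor_map_le t N.+1.
rewrite !cantor_sumS /cantor_digit sN tN addr0.
have := cantor_tail_lt_weight N; lra.
Qed.

Lemma cantor_map_inj : injective cantor_map.
Proof.
move=> s t e; apply: contrapT => st.
have ex : exists n, s n != t n.
  apply: contrapT => h; apply: st; apply/funext => n.
  by apply/eqP; apply: contrapT => /negP hn; apply: h; exists n.
case: (ex_minnP ex) => N sNt Hmin.
have below i : (i < N)%N -> s i = t i.
  move=> iN; apply/eqP; apply: contrapT => /negP hi.
  by have := Hmin i hi; rewrite leqNgt iN.
move: sNt; case sN: (s N); case tN: (t N) => // _.
- by have := cantor_map_lt below sN tN; rewrite e ltxx.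
- have := @cantor_map_lt t s N (fun i iN => esym (below i iN)) tN sN.
  by rewrite e ltxx.
Qed.

Lemma cantor_map_I01 s : I01 (cantor_map s).
Proof.
rewrite /= in_itv /=; apply/andP; split.
  exact: le_trans (cantor_sum_ge0 s 0) (cantor_map_ge s 0).
apply: (le_trans (cantor_map_le s 0)).
rewrite /cantor_sum big_ord0 add0r /cantor_tail expr0 mulr1.
by rewrite ler_pdivrMr // mul1r ler_nat.
Qed.

(* the 2^N possible values of cantor_sum _ N *)
Fixpoint cantor_sums (N : nat) : seq R :=
  if N is N'.+1 then cantor_sums N' ++ [seq y + cantor_weight N' | y <- cantor_sums N']
  else [:: 0].

Lemma cantor_sum_in s N : cantor_sum s N \in cantor_sums N.
Proof.
elim: N => [|N IH]; first by rewrite /cantor_sum big_ord0 mem_seq1.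
rewrite cantor_sumS /cantor_digit /= mem_cat; case: (s N).
  by rewrite (map_f (fun y => y + cantor_weight N) IH) orbT.
by rewrite addr0 IH.
Qed.

Lemma size_cantor_sums N : size (cantor_sums N) = (2 ^ N)%N.
Proof.
by elim: N => // N IH; rewrite /= size_cat size_map IH expnS mul2n addnn.
Qed.

Local Notation mu := ((@wlength R idfun)^*%mu).

Definition interval_cover (Ls : seq R) (e : R) : set R :=
  [set x | exists2 y, y \in Ls & y <= x <= y + e].

Lemma outer_interval_cover (Ls : seq R) (e : R) : 0 <= e ->
  (mu (interval_cover Ls e) <= ((size Ls)%:R * e)%:E)%E.
Proof.
move=> e0; elim: Ls => [|y Ls IH].
  rewrite (_ : interval_cover [::] e = set0) ?outer_measure0 ?mul0r //.
  by apply/seteqP; split => x // [].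
have mu_itv : (mu [set` `[y, (y + e)%R]] <= e%:E)%E.
  have -> : mu [set` `[y, (y + e)%R]] =
      (if (y%:E < (y + e)%:E)%E then ((y + e)%:E - y%:E)%E else 0%E)
    := lebesgue_measure_itv _.
  case: ifP => _; last by rewrite lee_fin.
  by rewrite -EFinB addrC addKr.
apply: (@le_trans _ _ (mu ([set` `[y, (y + e)%R]] `|` interval_cover Ls e))).
  apply: le_outer_measure => x [z]; rewrite inE => /orP[/eqP ->|zL] h.
    by left; rewrite /= in_itv.
  by right; exists z.
apply: (le_trans (outer_measureU2 _ _ _)).
by rewrite /= -nat1r mulrDl mul1r EFinD; apply: leeD.
Qed.

Lemma range_cantor_map_sub N :
  range cantor_map `<=` interval_cover (cantor_sums N) (cantor_tail N).
Proof.
move=> _ [s _ <-]; exists (cantor_sum s N); first exact: cantor_sum_in.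
by rewrite cantor_map_ge cantor_map_le.
Qed.

(* 2^N * cantor_tail N = (2/3) / 2^N tends to 0 *)
Lemma cantor_cover_small (e : R) : 0 < e ->
  exists N, (2 ^ N)%:R * cantor_tail N <= e.
Proof.
move=> e0; have [N HN] : exists N : nat, 1 / e < N%:R.
  exists (Num.Def.archi_bound (1 / e)); apply: archi_boundP.
  by rewrite divr_ge0 // ltW.
exists N.
have h4 : (4 : R) ^+ N = 2 ^+ N * 2 ^+ N by rewrite -exprMn; congr (_ ^+ _); lra.
have hN : (N%:R : R) <= 2 ^+ N by rewrite -natrX ler_nat ltnW // ltn_expl.
have h2 : (0 : R) < 2 ^+ N by rewrite exprn_gt0.
rewrite natrX /cantor_tail h4.
have -> : 2 ^+ N * (2 / (3 * (2 ^+ N * 2 ^+ N))) = 2 / (3 * 2 ^+ N) :> R.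
  by field; rewrite gt_eqF.
rewrite ler_pdivrMr ?mulr_gt0 //.
have : 1 < e * N%:R by rewrite -ltr_pdivrMl // mulr1 -div1r.
have : e * N%:R <= e * 2 ^+ N by rewrite ler_wpM2l // ltW.
rewrite mulrCA; lra.
Qed.

Lemma cantor_range_negligible : (leb R).-negligible (range cantor_map).
Proof.
apply: outer_null_negligible; apply/eqP; rewrite eq_le outer_measure_ge0 andbT.
apply/lee_addgt0Pr => e e0; rewrite add0e.
have [N HN] := cantor_cover_small e0.
apply: (@le_trans _ _ (mu (interval_cover (cantor_sums N) (cantor_tail N)))).
  exact/le_outer_measure/range_cantor_map_sub.
apply: (le_trans (outer_interval_cover _ (cantor_tail_ge0 N))).
by rewrite lee_fin size_cantor_sums.
Qed.

End CantorNullSet.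

(* A point psi(flatten q) encodes a sequence
   of pairs (y_i, b_i) (a real coded by its rational cut, and a bit); the set
   A "accepts" the code when b_i records whether y_i lies in A. *)
Section IndependentFamily.
Variable R : realType.
Variable psi : (nat -> bool) -> R.
Hypothesis psi_inj : injective psi.

(* the Dedekind cut of x, as a sequence of bits indexed by the rationals *)
Definition rat_cut (x : R) (n : nat) : bool :=
  if @unpickle rat n is Some q then ratr q < x else false.

(* a real is determined by its cut, since the rationals are dense *)
Lemma rat_cut_inj : injective rat_cut.
Proof.
suff cut_lt x y : x < y -> rat_cut x <> rat_cut y.
  move=> x y e; have [xy|yx|//] := ltgtP x y; first by have := cut_lt _ _ xy.
  by have := cut_lt _ _ yx; rewrite e.
move=> xy; have [q] := rat_in_itvoo xy; rewrite in_itv /= => /andP[xq qy] e.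
have := congr1 (fun f => f (pickle q)) e; rewrite /rat_cut pickleK /=.
by rewrite qy ltNge (ltW xq).
Qed.

Definition flatten_bits (q : nat -> nat -> bool) : nat -> bool :=
  fun n => q (Cantor.of_nat n).1 (Cantor.of_nat n).2.

Lemma flatten_bits_inj : injective flatten_bits.
Proof.
move=> q q' e; apply/funext => i; apply/funext => j.
have := congr1 (fun f => f (Cantor.to_nat (i, j))) e.
by rewrite /flatten_bits Cantor.cancel_of_to.
Qed.

(* row i of q codes the pair (y, q i 0) where q i (j+1) = rat_cut y j *)
Definition accepts (A : set R) (q : nat -> nat -> bool) : Prop :=
  forall i y, (forall j, rat_cut y j = q i j.+1) -> (A y <-> q i 0%N = true).

Definition indep_fun (A : set R) (x : R) : R :=
  if `[< exists q, psi (flatten_bits q) = x /\ accepts A q >] then 1 else 0.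

Lemma indep_fun_support A x : indep_fun A x != 0 -> range psi x.
Proof.
rewrite /indep_fun; case: asboolP => [[q [<- _]] _|]; last by rewrite eqxx.
by exists (flatten_bits q).
Qed.

(* a point where A0 and C i differ (if any) *)
Definition separating_point (A0 : set R) (C : nat -> set R) (i : nat) : R :=
  xget 0 (fun y => ~ (A0 y <-> C i y)).

Definition separating_code (A0 : set R) (C : nat -> set R) : nat -> nat -> bool :=
  fun i j => if j is j'.+1 then rat_cut (separating_point A0 C i) j'
             else `[< A0 (separating_point A0 C i) >].

Lemma accepts_separating_code A0 C : accepts A0 (separating_code A0 C).
Proof.
move=> i y Hy; have -> : y = separating_point A0 C i.
  by apply: rat_cut_inj; apply/funext => j; exact: Hy.
by rewrite /separating_code; split => [?|/asboolP //]; exact/asboolP.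
Qed.

Lemma rejects_separating_code A0 C i :
  C i <> A0 -> ~ accepts (C i) (separating_code A0 C).
Proof.
move=> CA acc.
have ex : exists y, ~ (A0 y <-> C i y).
  apply: contrapT => h; apply: CA; apply/funext => y; apply/propext.
  by split => ?; apply: contrapT => h'; apply: h; exists y; tauto.
have := xgetPex 0 ex; rewrite -/(separating_point A0 C i) => differ.
have := acc i (separating_point A0 C i) (fun j => erefl); rewrite /separating_code.
have : A0 (separating_point A0 C i) <-> `[< A0 (separating_point A0 C i) >] = true.
  by split => [?|/asboolP //]; exact/asboolP.
tauto.
Qed.

Lemma indep_fun_separates A0 (C : nat -> set R) : exists x,
  [/\ range psi x, indep_fun A0 x = 1 & forall i, C i <> A0 -> indep_fun (C i) x = 0].
Proof.
exists (psi (flatten_bits (separating_code A0 C))); split.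
- by exists (flatten_bits (separating_code A0 C)).
- rewrite /indep_fun; case: asboolP => // -[].
  by exists (separating_code A0 C); split => //; exact: accepts_separating_code.
- move=> i CA; rewrite /indep_fun; case: asboolP => // -[q].
  move=> [/psi_inj/flatten_bits_inj -> acc].
  by have := rejects_separating_code CA.
Qed.

End IndependentFamily.

(* The model sequence: given an increasing chain (M_a) of null sets that
   eventually contains each point of [0,1], any F agreeing off a null set D
   with a |-> s * 1_{M_a} (s > 0) converges a.e. to s while its integrals
   all vanish; hence F lies in NM, NF and ND. *)
Section ModelSequence.
Variables (R : realType) (I : Type) (lt : I -> I -> Prop).
Hypothesis lt_trans : forall x y z, lt x y -> lt y z -> lt x z.
Hypothesis lt_total : forall x y, [\/ x = y, lt x y | lt y x].
Hypothesis no_max : forall a, exists b, lt a b.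
Variable t0 : I.
Variable M : I -> set R.
Hypothesis M_null : forall a, (leb R).-negligible (M a).
Hypothesis M_mono : forall a b, lt a b -> M a `<=` M b.
Hypothesis M_cover : forall x, I01 x -> exists t, forall a, lt t a -> M a x.
Variable D : set R.
Hypothesis D_null : (leb R).-negligible D.

Definition scaled_indicator_off (F : I -> R -> R) (s : R) : Prop :=
  forall a x, I01 x -> ~ D x -> F a x = s * \1_(M a) x.

Variables (F : I -> R -> R) (s : R).
Hypothesis s_gt0 : 0 < s.
Hypothesis HF : scaled_indicator_off F s.

Lemma model_out a x : I01 x -> ~ (D `|` M a) x -> F a x = 0.
Proof.
move=> Ix nx; rewrite HF ?indicE ?memNset ?mulr0 // => ?; apply: nx.
- by right.
- by left.
Qed.

Lemma model_eventually x : I01 x -> ~ D x -> exists t, forall a, lt t a -> F a x = s.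
Proof.
move=> Ix nDx; have [t Ht] := M_cover Ix; exists t => a ta.
by rewrite HF // indicE mem_set ?mulr1 //; exact: Ht.
Qed.

Lemma model_ge0 a x : I01 x -> ~ D x -> 0 <= F a x.
Proof.
move=> Ix nDx; rewrite HF // indicE.
by case: (_ \in _); rewrite ?mulr1 ?mulr0 // ltW.
Qed.

Lemma model_null_part a : (leb R).-negligible (D `|` M a).
Proof. exact: negligibleU. Qed.

Lemma model_measurable a : leb_measurable (F a).
Proof. exact: (measurable_ae_const (model_null_part a) (@model_out a)). Qed.

Lemma model_int0 a : int01 (EFin \o F a) = 0%E.
Proof.
by apply: (int01_ae_const (model_null_part a)) => x Ix nx /=; rewrite model_out.
Qed.

Lemma model_ae_limit : ae01 (fun x => kconv lt (fun a => F a x) s).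
Proof.
apply: (ae01_off D_null) => x Ix nDx; have [t Ht] := model_eventually Ix nDx.
exact: kconv_eventually_const Ht.
Qed.

Lemma model_liminf x : I01 x -> ~ D x -> kliminf lt (fun a => (F a x)%:E) = s%:E.
Proof.
move=> Ix nDx; have [t Ht] := model_eventually Ix nDx.
apply: (kliminf_eventually_const lt_trans lt_total no_max (t := t)) => a ta.
by rewrite Ht.
Qed.

Lemma model_int_liminf : int01 (fun x => kliminf lt (fun a => (F a x)%:E)) = s%:E.
Proof. exact: (int01_ae_const D_null model_liminf). Qed.

(* membership in the three classes: the limit/liminf integrates to s > 0
   while the integrals of F a are all 0 *)
Lemma model_NM : NM lt F.
Proof.
split; first exact: model_measurable.
- move=> a b ab; apply: (ae01_off D_null) => x Ix nDx.
  rewrite (model_ge0 a) ?HF ?indicE //=.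
  have [Ma|nMa] := pselect (M a x).
    have Mb : M b x by case: ab => [<-|ab]; last exact: M_mono Ma.
    by rewrite !mem_set.
  by rewrite (memNset nMa) mulr0; case: (_ \in _); rewrite ?mulr1 ?mulr0 // ltW.
exists (fun _ => s); split; [exact: integrable_cst | exact: model_ae_limit |].
rewrite int01_cst.
apply: (not_kconv_eventually_const lt_trans lt_total no_max (c := 0%E) (t := t0)).
- exact: ereal_hausdorff.
- by move=> a _; rewrite model_int0.
- by move=> /eqP; rewrite eq_sym eqe gt_eqF.
Qed.

Lemma model_NF : NF lt F.
Proof.
split; first exact: model_measurable.
- by move=> a; apply: (ae01_off D_null) => x; exact: model_ge0.
- exact: (integrable_ae_const D_null model_liminf).
rewrite model_int_liminf.
rewrite (kliminf_eventually_const lt_trans lt_total no_max (v := 0%E) (t := t0))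
  ?lte_fin //.
by move=> a _; rewrite model_int0.
Qed.

Lemma model_ND : ND lt F.
Proof.
split; first exact: model_measurable.
- exists (fun _ => s); split; first exact: integrable_cst.
  move=> a; apply: (ae01_off D_null) => x Ix nDx.
  rewrite HF // indicE.
  by case: (_ \in _); rewrite ?mulr1 ?mulr0 ?normr0 ?gtr0_norm // ltW.
exists (fun _ => s); split; [exact: integrable_cst | exact: model_ae_limit |].
apply: (not_kconv_eventually_const lt_trans lt_total no_max (c := s%:E) (t := t0)).
- exact: ereal_hausdorff.
- move=> a _; apply: (int01_ae_const (model_null_part a)) => x Ix nx.
  by rewrite model_out // sub0r normrN gtr0_norm.
- by move=> /eqP; rewrite eqe gt_eqF.
Qed.

End ModelSequence.

Section Basis.
Variables (R : realType) (I : Type) (t0 : I) (M : I -> set R).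
Local Notation D := (range (@cantor_map R)).
Local Notation e := (indep_fun (@cantor_map R)).

Definition basis (A : set R) : I -> R -> R :=
  fun a x => \1_(I01 `&` ~` D `&` M a) x + e A x.

Lemma indep_fun_off A x : ~ D x -> e A x = 0.
Proof. by move=> nDx; apply/eqP; apply: contrapT => /negP /indep_fun_support. Qed.

Lemma basis_out A a x : ~ I01 x -> basis A a x = 0.
Proof.
move=> nIx; rewrite /basis indep_fun_off ?addr0.
  by rewrite indicE memNset // => -[[]].
by move=> [s _ sx]; apply: nIx; rewrite -sx; exact: cantor_map_I01.
Qed.

Lemma basis_off A a x : I01 x -> ~ D x -> basis A a x = \1_(M a) x.
Proof.
move=> Ix nDx; rewrite /basis indep_fun_off // addr0 !indicE.
have [Ma|nMa] := pselect (M a x); first by rewrite !mem_set.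
by rewrite !memNset // => -[].
Qed.

Lemma basis_on A a x : D x -> basis A a x = e A x.
Proof. by move=> Dx; rewrite /basis indicE memNset ?add0r // => -[[_]]. Qed.

(* distinct sets give distinct basis elements: separate them at a point of D *)
Lemma basis_inj : injective basis.
Proof.
move=> A A' eqAA'; apply: contrapT => AA'.
have [x [Dx eA eA']] := indep_fun_separates (@cantor_map_inj R) A (fun _ => A').
have eA'0 : e A' x = 0 by apply: (eA' 0%N) => A'A; apply: AA'.
have := congr1 (fun f => f t0 x) eqAA'; rewrite /= !basis_on // eA eA'0.
by move=> /eqP; rewrite oner_eq0.
Qed.

Lemma basis_card : Defs.card_eq {b | range basis b} (set R).
Proof.
split.
- exists (fun b : {b | range basis b} => s2val (cid2 (proj2_sig b))).
  move=> [b1 p1] [b2 p2] /= e12.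
  have b12 : b1 = b2.
    case: (cid2 p1) e12 => A1 /= _ h1; case: (cid2 p2) => A2 /= _ h2 e12.
    by rewrite -h1 -h2 e12.
  by subst b2; congr exist; apply: Prop_irrelevance.
- exists (fun A => exist (range basis) (basis A) (ex_intro2 _ _ A Logic.I erefl)).
  by move=> A A' e12; apply: basis_inj; exact: (congr1 (@proj1_sig _ _) e12).
Qed.

(* evaluate a vanishing combination at a point of D separating b_k from all
   the other b_j (independence of the family e) *)
Lemma basis_lin_indep (n : nat) (b : 'I_n -> I -> R -> R) (c : 'I_n -> R) :
  injective b -> (forall k, range basis (b k)) ->
  (fun a x => \sum_(k < n) c k * b k a x) = (fun _ _ => 0) ->
  forall k, c k = 0.
Proof.
move=> binj Bb comb0 k.
have hA j : exists A, basis A = b j by have [A _ ?] := Bb j; exists A.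
pose A j := proj1_sig (cid (hA j)).
have bA j : basis (A j) = b j by rewrite /A; case: cid.
pose C (i : nat) : set R := if insub i is Some j then A (j : 'I_n) else A k.
have CA j : C (val j) = A j by rewrite /C valK.
have [x [Dx eAk eC]] := indep_fun_separates (@cantor_map_inj R) (A k) C.
have := congr1 (fun f => f t0 x) comb0 => /=.
rewrite (bigD1 k) //= -bA basis_on // eAk mulr1 big1 ?addr0 //.
move=> j jk; rewrite -bA basis_on // -CA eC ?mulr0 // CA => AjAk.
by move/eqP: jk; apply; apply: binj; rewrite -!bA AjAk.
Qed.

Lemma basis_combination n (b : 'I_n -> I -> R -> R) (c : 'I_n -> R) :
  (forall k, range basis (b k)) ->
  scaled_indicator_off M D (fun a x => \sum_(k < n) c k * b k a x) (\sum_(k < n) c k).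
Proof.
move=> Bb a x Ix nDx; rewrite mulr_suml; apply: eq_bigr => k _.
by have [A _ <-] := Bb k; rewrite basis_off.
Qed.

Lemma basis_pos_coneable (S : (I -> R -> R) -> Prop) :
  (forall F s, 0 < s -> scaled_indicator_off M D F s -> S F) -> pos_coneable_2c S.
Proof.
move=> model_in_S; exists (range basis); split.
- by move=> _ [A _ <-] a x; exact: basis_out.
- exact: basis_card.
- exact: basis_lin_indep.
- move=> n b c _ Bb c_gt0; apply: (model_in_S _ _ _ (basis_combination c Bb)).
  rewrite big_ord_recl; apply: ltr_pwDl => //.
  by apply: sumr_ge0 => i _; apply: ltW.
Qed.

End Basis.

Unset Implicit Arguments.

Theorem mainTheorem8 (R : realType) (I : Type) (lt : I -> I -> Prop)
  (Hwo : initial_well_order lt) (Hadd : is_addN R I) (Hcov : is_covN R I) :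
  [/\ pos_coneable_2c (@NM R I lt), pos_coneable_2c (@NF R I lt) &
      pos_coneable_2c (@ND R I lt)].
Proof.
have [_ lt_trans lt_total _ _] := Hwo.
have no_max := addN_no_max Hwo Hadd.
have [t0 _] := addN_inhabited Hadd.
have [M [M_null M_mono M_cover]] := null_chain_covering Hwo Hadd Hcov.
have D_null := cantor_range_negligible R.
split; apply: (basis_pos_coneable t0 (M := M)) => F s s_gt0 HF.
- exact: (model_NM lt_trans lt_total no_max t0 M_null M_mono M_cover D_null s_gt0 HF).
- exact: (model_NF lt_trans lt_total no_max t0 M_null M_cover D_null s_gt0 HF).
- exact: (model_ND lt_trans lt_total no_max t0 M_null M_cover D_null s_gt0 HF).
Qed.
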